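(* For every $n\ge1$ there are bijections $\varphi:\mathfrak{S}_n(213)\to\mathfrak{S}_n(312)$ and $\eta:\mathfrak{S}_n(132)\to\mathfrak{S}_n(231)$ preserving the descent set $\{i\in[n-1]:\pi_i>\pi_{i+1}\}$. Consequently $|\mathcal{B}_n(213)|=|\mathcal{B}_n(312)|$ and $|\mathcal{B}_n(132)|=|\mathcal{B}_n(231)|$ for all $n\ge1$.
   Context: $\mathfrak{S}_n(\sigma)$ is the set of permutations in $\mathfrak{S}_n$ with no subsequence order-isomorphic to the pattern $\sigma$. A ballot permutation is a $\pi\in\mathfrak{S}_n$ such that every prefix $\pi_1\cdots\pi_i$ has at most as many descents ($\pi_j>\pi_{j+1}$) as ascents ($\pi_j<\pi_{j+1}$); $\mathcal{B}_n(\sigma)$ is the set of $\sigma$-avoiding ballot permutations in $\mathfrak{S}_n$. *)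

From mathcomp Require Import all_boot all_fingroup.
Set Implicit Arguments. Unset Strict Implicit. Unset Printing Implicit Defensive.

(* Permutations of [n] are 'S_n = {perm 'I_n}; positions and values are 0-based. *)
(* one-line value of pi at position j (as a nat), 0 past the end *)
Definition pval n (pi : 'S_n) (j : nat) : nat :=
  if insub j is Some i then val (pi i) else 0.

(* A pattern is given in one-line notation as a sequence of distinct naturals,
   e.g. [:: 2; 1; 3] for 213.  pi contains the pattern p iff there are positions
   f 0 < f 1 < ... < f (k-1) whose values are order-isomorphic to p. *)
Definition contains n (pi : 'S_n) (p : seq nat) : bool :=
  [exists f : {ffun 'I_(size p) -> 'I_n},
    [forall a : 'I_(size p), forall b : 'I_(size p),
       ((a < b) ==> (f a < f b)) &&
       ((pi (f a) < pi (f b)) == (nth 0 p a < nth 0 p b))]].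

Definition avoids n (pi : 'S_n) (p : seq nat) : bool := ~~ contains pi p.

(* descent set {i in [n-1] : pi_i > pi_{i+1}}, with 1-based i, stored as nat set *)
Definition descent_set n (pi : 'S_n) : seq nat :=
  [seq i <- iota 1 n.-1 | pval pi i.-1 > pval pi i].

Definition des_prefix n (pi : 'S_n) (m : nat) : nat :=
  count (fun j => pval pi j > pval pi j.+1) (iota 0 m.-1).
Definition asc_prefix n (pi : 'S_n) (m : nat) : nat :=
  count (fun j => pval pi j < pval pi j.+1) (iota 0 m.-1).

Definition ballot n (pi : 'S_n) : bool :=
  [forall m : 'I_n.+1, (1 <= m) ==> (des_prefix pi m <= asc_prefix pi m)].

Definition Av n (p : seq nat) : {set 'S_n} := [set pi : 'S_n | avoids pi p].
Definition Bal n (p : seq nat) : {set 'S_n} := [set pi in Av n p | ballot pi].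

Definition bij_between n (phi : 'S_n -> 'S_n) (A B : {set 'S_n}) : Prop :=
  [/\ {in A, forall pi, phi pi \in B}, {in A &, injective phi}
    & {in B, forall tau, exists2 pi, pi \in A & phi pi = tau}].

From Pilot Require Import Defs.
From mathcomp Require Import all_boot all_fingroup.
From mathcomp Require Import zify.
From Stdlib Require Import ClassicalEpsilon.
Set Implicit Arguments. Unset Strict Implicit. Unset Printing Implicit Defensive.

(* A permutation word avoiding 213 splits around its minimum as a 1 b with
   every entry of a above every entry of b, and a, b (standardized) again
   avoid 213; for 312 the same holds with a below b.  Recursively, both
   classes are in bijection with binary trees: a tree is labelled in in-order
   by putting the minimum at the root and giving the left subtree the high
   (213) or the low (312) block of the remaining values.  Since the root is
   below everything else, the descent word of a labelling depends only on
   the tree.  Putting the maximum at the root instead gives 132 and 231. *)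

Definition occurs (s : seq nat) (q : nat -> nat -> nat -> bool) : Prop :=
  exists i j k,
    [/\ i < j, j < k, k < size s & q (nth 0 s i) (nth 0 s j) (nth 0 s k)].

Lemma nth_cat_left (a b : seq nat) m i :
  i < size a -> nth 0 (a ++ m :: b) i = nth 0 a i.
Proof. by move=> ia; rewrite nth_cat ia. Qed.

Lemma nth_cat_mid (a b : seq nat) m : nth 0 (a ++ m :: b) (size a) = m.
Proof. by rewrite nth_cat ltnn subnn. Qed.

Lemma nth_cat_right (a b : seq nat) m i :
  size a < i -> nth 0 (a ++ m :: b) i = nth 0 b (i - (size a).+1).
Proof.
move=> ai; rewrite nth_cat ltnNge ltnW //=.
by have -> : i - size a = (i - (size a).+1).+1 by lia.
Qed.

Lemma nth_around (a b : seq nat) m u : u < size (a ++ m :: b) ->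
  let x := nth 0 (a ++ m :: b) u in
  [\/ u < size a /\ x \in a, u = size a /\ x = m | size a < u /\ x \in b].
Proof.
rewrite size_cat /= => us; case: ltngtP => [ua|au|->].
- by constructor 1; rewrite nth_cat_left // mem_nth.
- have ub : u - (size a).+1 < size b by lia.
  by constructor 3; rewrite nth_cat_right // mem_nth.
- by constructor 2; rewrite nth_cat_mid.
Qed.

Lemma occurs_catl (s t : seq nat) q : occurs s q -> occurs (s ++ t) q.
Proof.
case=> i [j [k [ij jk ks qs]]]; exists i, j, k; rewrite size_cat !nth_cat.
by rewrite ks (ltn_trans jk ks) (ltn_trans ij (ltn_trans jk ks)); split=> //; lia.
Qed.

Lemma occurs_catr (s t : seq nat) q : occurs t q -> occurs (s ++ t) q.
Proof.
case=> i [j [k [ij jk kt qt]]]; exists (size s + i), (size s + j), (size s + k).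
by rewrite size_cat !nth_cat !ltnNge !leq_addr /= !addKn; split=> //; lia.
Qed.

Lemma occurs_shift c s q : (forall x y z, q (c + x) (c + y) (c + z) = q x y z) ->
  occurs (map (addn c) s) q <-> occurs s q.
Proof.
move=> qc; split; case=> i [j [k [ij jk ks qs]]]; exists i, j, k;
  rewrite ?size_map in ks *; split=> //.
  by rewrite !(nth_map 0) ?qc // in qs; lia.
by rewrite !(nth_map 0) ?qc //; lia.
Qed.

Lemma occurs_across (a b : seq nat) (m x y : nat) (q : nat -> nat -> nat -> bool) :
  x \in a -> y \in b -> q x m y -> occurs (a ++ m :: b) q.
Proof.
move=> xa yb qxy; exists (index x a), (size a), (size a + index y b).+1.
have ia : index x a < size a by rewrite index_mem.
have ib : index y b < size b by rewrite index_mem.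
rewrite nth_cat_left // nth_cat_mid nth_cat_right ?subSS ?addKn ?nth_index //; last by lia.
by rewrite size_cat /=; split=> //; lia.
Qed.

Lemma occurs_cat_cases (a b : seq nat) (m : nat) (q : nat -> nat -> nat -> bool) :
  occurs (a ++ m :: b) q ->
  [\/ occurs a q, occurs b q |
   exists x y z, q x y z /\
    [\/ [/\ x \in a, y \in a & z \in m :: b], [/\ x \in a, y = m & z \in b]
      | [/\ x \in rcons a m, y \in b & z \in b]]].
Proof.
case=> i [j [k [ij jk ks qs]]].
have [ka|ak] := ltnP k (size a).
  by constructor 1; exists i, j, k; rewrite !nth_cat_left // in qs; lia.
have [ai|ia] := ltnP (size a) i.
  constructor 2; exists (i - (size a).+1), (j - (size a).+1), (k - (size a).+1).
  rewrite !nth_cat_right // in qs; try lia.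
  by rewrite size_cat /= in ks; split=> //; lia.
constructor 3; do 3 eexists; split; first exact: qs.
have [[hi xi]|[hi xi]|[hi xi]] := nth_around (ltn_trans ij (ltn_trans jk ks));
have [[hj yj]|[hj yj]|[hj yj]] := nth_around (ltn_trans jk ks);
have [[hk zk]|[hk zk]|[hk zk]] := nth_around ks; try (exfalso; lia).
- by constructor 1; rewrite inE zk eqxx.
- by constructor 1; rewrite inE zk orbT.
- by constructor 2.
- by constructor 3; rewrite mem_rcons inE xi orbT.
- by constructor 3; rewrite mem_rcons inE xi eqxx.
Qed.

Definition descents (s : seq nat) : seq bool :=
  if s is x :: s' then pairmap (fun u v => v < u) x s' else [::].

Lemma descents_shift c s : descents (map (addn c) s) = descents s.
Proof.
case: s => //= x s; elim: s x => //= y s IH x.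
by rewrite ltn_add2l IH.
Qed.

Lemma nth_descents s i :
  i.+1 < size s -> nth false (descents s) i = (nth 0 s i.+1 < nth 0 s i).
Proof. by case: s => //= x s si; rewrite (nth_pairmap 0). Qed.

Lemma descents_around (rmin : bool) (a b : seq nat) m :
  {in a, forall x, if rmin then m < x else x < m} ->
  {in b, forall y, if rmin then m < y else y < m} ->
  descents (a ++ m :: b) =
    (if size a is 0 then [::] else descents a ++ [:: rmin]) ++
    (if size b is 0 then [::] else ~~ rmin :: descents b).
Proof.
move=> ha hb.
have head_b : (if size b is 0 then [::] else ~~ rmin :: descents b) =
    (if b is y :: _ then (y < m) :: descents b else [::]).
  case: b hb => //= y b hb; congr (_ :: _).
  by have := hb y (mem_head y b); case: (rmin); lia.
rewrite head_b; case: a ha => [|x a] ha /=; first by case: b {head_b hb}.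
rewrite pairmap_cat /= -catA; congr (_ ++ _ :: _); last by case: b {head_b hb}.
by have := ha (last x a) (mem_last x a); case: (rmin); lia.
Qed.

Lemma perm_iota_of_sub (s : seq nat) a k :
  uniq s -> {subset s <= iota a k} -> k <= size s -> perm_eq s (iota a k).
Proof.
move=> us sub ks; apply: uniq_perm => //; first exact: iota_uniq.
by have [] := uniq_min_size us sub; rewrite size_iota.
Qed.

Lemma destandardize (a : seq nat) c : uniq a -> {in a, forall x, c <= x < c + size a} ->
  exists a', a = map (addn c) a' /\ perm_eq a' (iota 0 (size a')).
Proof.
move=> ua ra; exists (map (subn^~ c) a).
have E : a = map (addn c) (map (subn^~ c) a).
  by rewrite -map_comp map_id_in // => x /ra /= xa; lia.
split=> //; apply: perm_iota_of_sub; rewrite ?size_map //.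
- by move: ua; rewrite {1}E map_inj_uniq //; apply: addnI.
- by move=> y /mapP [x /ra xa ->]; rewrite mem_iota; lia.
Qed.

Lemma interval_split (u v : seq nat) c : uniq (u ++ v) ->
  {in u ++ v, forall x, c <= x < c + size u + size v} ->
  {in u & v, forall x y, x < y} ->
  {in u, forall x, c <= x < c + size u} /\
  {in v, forall y, c + size u <= y < c + size u + size v}.
Proof.
rewrite cat_uniq => /and3P [uu _ uv] ruv uv_lt; split.
- move=> x xu; have := ruv x; rewrite mem_cat xu => /(_ isT) rx.
  have : size v <= size (iota x.+1 (c + size u + size v - x.+1)).
    apply: uniq_leq_size => // y yv; rewrite mem_iota.
    have := ruv y; rewrite mem_cat yv orbT => /(_ isT).
    by have := uv_lt x y xu yv; lia.
  by rewrite size_iota; lia.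
- move=> y yv; have := ruv y; rewrite mem_cat yv orbT => /(_ isT) ry.
  have : size u <= size (iota c (y - c)).
    apply: uniq_leq_size => // x xu; rewrite mem_iota.
    have := ruv x; rewrite mem_cat xu => /(_ isT).
    by have := uv_lt x y xu yv; lia.
  by rewrite size_iota; lia.
Qed.

Lemma split_at (s : seq nat) x : x \in s -> exists a b, s = a ++ x :: b.
Proof. by case/splitPr=> a b; exists a, b. Qed.

Lemma uniq_around (a b : seq nat) m : uniq (a ++ m :: b) ->
  [/\ uniq (a ++ b), m \notin a ++ b & {in a & b, forall x y, x != y}].
Proof.
rewrite -cat1s (perm_uniq (permEl (perm_catCA a [:: m] b))) cat1s /= => /andP [m_ab ab].
split=> // x y xa yb; apply: contraTneq yb => <-.
by move: ab; rewrite cat_uniq => /and3P [_ /hasPn b_a _]; apply/negP => /b_a; rewrite xa.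
Qed.

Lemma cat_around_inj (a b a' b' : seq nat) m : m \notin a -> m \notin a' ->
  a ++ m :: b = a' ++ m :: b' -> a = a' /\ b = b'.
Proof.
move=> ma ma' E.
have sa : size a = size a'.
  by have := congr1 (index m) E; rewrite !index_cat (negPf ma) (negPf ma') /= eqxx !addn0.
have := congr1 (take (size a)) E; rewrite {2}sa !take_size_cat // => ->; split=> //.
have := congr1 (drop (size a).+1) E; rewrite {2}sa.
by rewrite -!cat_rcons !drop_size_cat // size_rcons ?sa.
Qed.

Inductive btree := Leaf | Node of btree & btree.

Fixpoint nodes (t : btree) : nat :=
  if t is Node l r then (nodes l + nodes r).+1 else 0.

(* The
   root carries the minimum (rmin) or the maximum (~~ rmin) of the available
   values; the left subtree takes the lower (llow) or the upper (~~ llow)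
   block of the remaining ones. *)
Section Labelling.
Variables rmin llow : bool.

Definition left_shift (nl nr : nat) : nat :=
  (if rmin then 1 else 0) + (if llow then 0 else nr).
Definition right_shift (nl nr : nat) : nat :=
  (if rmin then 1 else 0) + (if llow then nl else 0).
Definition root_value (nl nr : nat) : nat := if rmin then 0 else nl + nr.

Fixpoint label (t : btree) : seq nat :=
  if t is Node l r then
    map (addn (left_shift (nodes l) (nodes r))) (label l)
      ++ root_value (nodes l) (nodes r)
      :: map (addn (right_shift (nodes l) (nodes r))) (label r)
  else [::].

(* The pattern avoided by the labellings, as a relation on the values of an
   occurrence: 213 (rmin, ~~ llow), 312 (rmin, llow), 132 (~~ rmin, ~~ llow)
   and 231 (~~ rmin, llow). *)
Definition forbidden (x y z : nat) : bool :=
  match rmin, llow with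
  | true, false => (y < x) && (x < z)
  | true, true => (y < z) && (z < x)
  | false, false => (x < z) && (z < y)
  | false, true => (z < x) && (x < y)
  end.

Lemma forbidden_shift c x y z : forbidden (c + x) (c + y) (c + z) = forbidden x y z.
Proof. by rewrite /forbidden; case: rmin; case: llow; rewrite !ltn_add2l. Qed.

Lemma size_label t : size (label t) = nodes t.
Proof. by elim: t => //= l IHl r IHr; rewrite size_cat /= !size_map IHl IHr addnS. Qed.

Lemma label_range t x : x \in label t -> x < nodes t.
Proof.
elim: t x => //= l IHl r IHr x; rewrite mem_cat inE.
case/or3P => [/mapP [y /IHl yl ->]|/eqP->|/mapP [y /IHr yr ->]];
  rewrite /left_shift /right_shift /root_value; case: rmin; case: llow; lia.
Qed.

Lemma mem_shifted_label c t x :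
  x \in map (addn c) (label t) -> c <= x < c + nodes t.
Proof. by case/mapP => y /label_range yt ->; lia. Qed.

Lemma label_uniq t : uniq (label t).
Proof.
elim: t => //= l IHl r IHr.
rewrite cat_uniq /= !map_inj_uniq ?IHl ?IHr //; try exact: addnI.
rewrite andTb negb_or andbT -andbA; apply/and3P; split.
- apply/negP => /mem_shifted_label.
  by rewrite /left_shift /root_value; case: rmin; case: llow; lia.
- apply/hasPn => y /mem_shifted_label yr; apply/negP => /mem_shifted_label.
  by rewrite /left_shift /right_shift in yr *; case: rmin yr; case: llow; lia.
- apply/negP => /mem_shifted_label.
  by rewrite /right_shift /root_value; case: rmin; case: llow; lia.
Qed.

Lemma label_perm t : perm_eq (label t) (iota 0 (nodes t)).
Proof.
apply: perm_iota_of_sub; rewrite ?label_uniq ?size_label //.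
by move=> x /label_range xt; rewrite mem_iota.
Qed.

(* Every labelling avoids its pattern: occurrences inside a block are excluded
   by induction, and the block structure rules out straddling ones. *)
Lemma label_avoids t : ~ occurs (label t) forbidden.
Proof.
elim: t => /= [|l IHl r IHr]; first by case=> i [j [k []]].
case/occurs_cat_cases => [/(occurs_shift _ (@forbidden_shift _))//|
                          /(occurs_shift _ (@forbidden_shift _))//|[x [y [z [fxyz]]]]].
rewrite !inE mem_rcons inE.
case=> [[/mem_shifted_label xl /mem_shifted_label yl /orP[/eqP zm | /mem_shifted_label zr]]
       |[/mem_shifted_label xl ym /mem_shifted_label zr]
       |[/orP[/eqP xm | /mem_shifted_label xl] /mem_shifted_label yr /mem_shifted_label zr]];
  subst; unfold forbidden, left_shift, right_shift, root_value in *;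
  destruct rmin, llow; lia.
Qed.

(* The descent word read off the tree: the root is a descent bottom (rmin) or
   an ascent top (~~ rmin) whatever the value blocks are. *)
Fixpoint shape_descents (t : btree) : seq bool :=
  if t is Node l r then
    (if nodes l is 0 then [::] else shape_descents l ++ [:: rmin]) ++
    (if nodes r is 0 then [::] else ~~ rmin :: shape_descents r)
  else [::].

Lemma descents_label t : descents (label t) = shape_descents t.
Proof.
elim: t => //= l IHl r IHr.
rewrite (@descents_around rmin) ?size_map ?size_label ?descents_shift ?IHl ?IHr //.
- move=> x /mem_shifted_label.
  by rewrite /left_shift /root_value; case: rmin; case: llow; lia.
- move=> y /mem_shifted_label.
  by rewrite /right_shift /root_value; case: rmin; case: llow; lia.
Qed.

(* A tree is recovered from its labelling: the root value splits the word
   into the labellings of the two subtrees. *)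
Lemma label_inj : injective label.
Proof.
elim=> [|l IHl r IHr] [|l' r'] //=; try by move/(congr1 size); rewrite size_cat /= addnS.
move=> E; have nodes_eq := congr1 size E.
rewrite !size_cat /= !size_map !size_label in nodes_eq.
have root_eq : root_value (nodes l') (nodes r') = root_value (nodes l) (nodes r).
  by rewrite /root_value; case: (rmin) => //; lia.
have root_notin t1 t2 : root_value (nodes t1) (nodes t2) \notin
    map (addn (left_shift (nodes t1) (nodes t2))) (label t1).
  apply/negP => /mem_shifted_label.
  by rewrite /left_shift /root_value; case: rmin; case: llow; lia.
rewrite root_eq in E; have [|El Er] := cat_around_inj (root_notin l r) _ E.
  by rewrite -root_eq root_notin.
have nl : nodes l = nodes l' by have := congr1 size El; rewrite !size_map !size_label.
have nr : nodes r = nodes r' by lia.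
move: El Er; rewrite nl nr.
by move=> /(inj_map (@addnI _)) /IHl -> /(inj_map (@addnI _)) /IHr ->.
Qed.

Lemma root_blocks (a b : seq nat) :
  let s := a ++ root_value (size a) (size b) :: b in
  uniq s -> {in s, forall x, x < size s} -> ~ occurs s forbidden ->
  {in a, forall x, let c := left_shift (size a) (size b) in c <= x < c + size a} /\
  {in b, forall y, let c := right_shift (size a) (size b) in c <= y < c + size b}.
Proof.
set m := root_value _ _ => s us s_lt av.
have [ab m_ab a_neq_b] := uniq_around us.
have range_ab x : x \in a ++ b -> x < size a + (size b).+1 /\ x != m.
  move=> xab; split; last by apply: contraNneq m_ab => <-.
  have := s_lt x; rewrite size_cat /=; apply.
  by move: xab; rewrite !mem_cat inE => /orP [] ->; rewrite ?orbT.
have separated : {in a & b, forall x y, if llow then x < y else y < x}.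
  move=> x y xa yb; apply/negPn/negP => xy; apply: av; apply: (occurs_across xa yb).
  have [xN xm] : x < size a + (size b).+1 /\ x != m.
    by apply: range_ab; rewrite mem_cat xa.
  have [yN ym] : y < size a + (size b).+1 /\ y != m.
    by apply: range_ab; rewrite mem_cat yb orbT.
  move: xN xm yN ym (a_neq_b x y xa yb) xy; rewrite /m /forbidden /root_value.
  by case: rmin; case: llow; lia.
pose c := if rmin then 1 else 0.
have values : {in a ++ b, forall x, c <= x < c + size a + size b}.
  by move=> x /range_ab []; rewrite /c /m /root_value; case: rmin; lia.
rewrite /left_shift /right_shift -/c; case: llow separated => separated.
  by have [] := interval_split ab values separated; rewrite !addn0.
have [] := interval_split (u := b) (v := a) (c := c).
- by rewrite uniq_catC.
- by move=> x; rewrite mem_cat orbC -mem_cat addnAC; apply: values.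
- by move=> y x yb xa; apply: separated.
by rewrite !addn0 => rb ra; split.
Qed.

Lemma root_decomposition (s : seq nat) :
  s != [::] -> perm_eq s (iota 0 (size s)) -> ~ occurs s forbidden ->
  exists a b, [/\ s = map (addn (left_shift (size a) (size b))) a
                        ++ root_value (size a) (size b)
                        :: map (addn (right_shift (size a) (size b))) b,
    perm_eq a (iota 0 (size a)), perm_eq b (iota 0 (size b)),
    ~ occurs a forbidden & ~ occurs b forbidden].
Proof.
move=> s0 sp av.
have ms : (if rmin then 0 else (size s).-1) \in s.
  by rewrite (perm_mem sp) mem_iota; case: (rmin); case: s s0 {sp av} => //= *; lia.
have [a [b sE]] := split_at ms.
have rootE : (if rmin then 0 else (size s).-1) = root_value (size a) (size b).
  by rewrite /root_value sE size_cat /= addnS.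
rewrite rootE in sE; subst s => {ms rootE s0}.
set s := a ++ _ :: b in sp av *.
have us : uniq s by rewrite (perm_uniq sp) iota_uniq.
have s_lt : {in s, forall x, x < size s} by move=> x; rewrite (perm_mem sp) mem_iota.
have [ra rb] := root_blocks us s_lt av.
have [ab _ _] := uniq_around us; move: ab; rewrite cat_uniq => /and3P [ua _ ub].
have [a' [aE a'p]] := destandardize ua ra.
have [b' [bE b'p]] := destandardize ub rb.
have sa : size a' = size a by rewrite {1}aE size_map.
have sb : size b' = size b by rewrite {1}bE size_map.
exists a', b'; split=> //; first by rewrite sa sb -aE -bE.
- move/(occurs_shift _ (@forbidden_shift (left_shift (size a) (size b)))).
  by rewrite -aE => /(occurs_catl (_ :: b)) /av.
- move/(occurs_shift _ (@forbidden_shift (right_shift (size a) (size b)))).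
  rewrite -bE => /(occurs_catr (a ++ [:: root_value (size a) (size b)])).
  by rewrite -catA => /av.
Qed.

Lemma label_surj (s : seq nat) :
  perm_eq s (iota 0 (size s)) -> ~ occurs s forbidden -> exists t, label t = s.
Proof.
have [N] := ubnP (size s); elim: N s => // N IH s sN sp av.
have [->|s0] := eqVneq s [::]; first by exists Leaf.
have [a [b [sE ap bp ava avb]]] := root_decomposition s0 sp av.
have [sa sb] : size a < N /\ size b < N.
  by move: sN; rewrite sE size_cat /= !size_map; lia.
have [ta ta_a] := IH a sa ap ava; have [tb tb_b] := IH b sb bp avb.
by exists (Node ta tb); rewrite sE /= -ta_a -tb_b !size_label.
Qed.

End Labelling.

Definition word n (pi : 'S_n) : seq nat := map (Defs.pval pi) (iota 0 n).

Lemma pvalE n (pi : 'S_n) (i : 'I_n) : Defs.pval pi i = pi i.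
Proof. by rewrite /Defs.pval insubT // => ?; congr (nat_of_ord (pi _)); apply: val_inj. Qed.

Lemma nth_word n (pi : 'S_n) j : nth 0 (word pi) j = Defs.pval pi j.
Proof.
have [jn|nj] := ltnP j n; first by rewrite (nth_map 0) ?size_iota // nth_iota.
by rewrite nth_default ?size_map ?size_iota // /Defs.pval insubF // ltnNge nj.
Qed.

Lemma size_word n (pi : 'S_n) : size (word pi) = n.
Proof. by rewrite size_map size_iota. Qed.

Lemma word_perm n (pi : 'S_n) : perm_eq (word pi) (iota 0 n).
Proof.
apply: perm_iota_of_sub; rewrite ?size_word //.
- rewrite map_inj_in_uniq ?iota_uniq // => i j; rewrite !mem_iota /= => ilt jlt.
  by rewrite (pvalE pi (Ordinal ilt)) (pvalE pi (Ordinal jlt)) => /val_inj /perm_inj [].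
- move=> x /mapP [i]; rewrite mem_iota /= => ilt ->.
  by rewrite (pvalE pi (Ordinal ilt)) mem_iota /=.
Qed.

Lemma word_uniq n (pi : 'S_n) : uniq (word pi).
Proof. by rewrite (perm_uniq (word_perm pi)) iota_uniq. Qed.

Lemma word_inj n : injective (@word n).
Proof.
move=> pi1 pi2 E; apply/permP => i; apply/val_inj.
by have := congr1 (nth 0 ^~ i) E; rewrite /= !nth_word !pvalE.
Qed.

Lemma word_surj n (s : seq nat) : perm_eq s (iota 0 n) -> exists pi : 'S_n, word pi = s.
Proof.
move=> sp; have us : uniq s by rewrite (perm_uniq sp) iota_uniq.
have sn : size s = n by rewrite (perm_size sp) size_iota.
have s_lt (i : 'I_n) : nth 0 s i < n.
  by rewrite -[_ < n](mem_iota 0) -(perm_mem sp) mem_nth ?sn.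
pose f (i : 'I_n) := Ordinal (s_lt i).
have f_inj : injective f.
  by move=> i j /(congr1 val) /eqP; rewrite /= nth_uniq ?sn // => /eqP /val_inj.
exists (perm f_inj); apply: (@eq_from_nth _ 0); rewrite ?size_word ?sn // => i ilt.
by rewrite nth_word (pvalE _ (Ordinal ilt)) permE.
Qed.

Definition order_iso3 (p0 p1 p2 x y z : nat) : bool :=
  [&& (x < y) == (p0 < p1), (x < z) == (p0 < p2) & (y < z) == (p1 < p2)].

Lemma ltn_eq_swap x y p q :
  x != y -> p != q -> ((y < x) == (q < p)) = ((x < y) == (p < q)).
Proof. by case: ltngtP => // _ _; case: ltngtP. Qed.

Lemma contains3 n (pi : 'S_n) p0 p1 p2 : uniq [:: p0; p1; p2] ->
  contains pi [:: p0; p1; p2] <-> occurs (word pi) (order_iso3 p0 p1 p2).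
Proof.
rewrite /= !inE negb_or => /and3P [/andP [p01 p02] p12 _]; split.
  case/existsP => f /forallP f_ok.
  have f_pair a b := forallP (f_ok a) b.
  have /andP [f01 c01] := f_pair (@Ordinal 3 0 isT) (@Ordinal 3 1 isT).
  have /andP [_ c02] := f_pair (@Ordinal 3 0 isT) (@Ordinal 3 2 isT).
  have /andP [f12 c12] := f_pair (@Ordinal 3 1 isT) (@Ordinal 3 2 isT).
  exists (f (@Ordinal 3 0 isT)), (f (@Ordinal 3 1 isT)), (f (@Ordinal 3 2 isT)).
  move: f01 f12 c01 c02 c12 => /= f01 f12 /eqP c01 /eqP c02 /eqP c12.
  by rewrite size_word ltn_ord !nth_word !pvalE /order_iso3 c01 c02 c12 !eqxx.
case=> i [j [k [ij jk]]]; rewrite size_word => kn.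
have jn := ltn_trans jk kn; have i_n := ltn_trans ij jn.
have dw u v : u < n -> v < n -> u != v -> nth 0 (word pi) u != nth 0 (word pi) v.
  by move=> un vn uv; rewrite nth_uniq ?size_word ?word_uniq.
have dij := dw i j i_n jn (negbT (ltn_eqF ij)).
have dik := dw i k i_n kn (negbT (ltn_eqF (ltn_trans ij jk))).
have djk := dw j k jn kn (negbT (ltn_eqF jk)).
rewrite /order_iso3 !nth_word in dij dik djk * => /and3P [c01 c02 c12].
pose f : {ffun 'I_3 -> 'I_n} := [ffun a : 'I_3 =>
  match val a with 0 => Ordinal i_n | 1 => Ordinal jn | _ => Ordinal kn end].
apply/existsP; exists f; apply/forallP => a; apply/forallP => b.
rewrite (pvalE _ (Ordinal i_n)) (pvalE _ (Ordinal jn)) (pvalE _ (Ordinal kn))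
  in dij dik djk c01 c02 c12.
case: a => [[|[|[|a]]] ?] //; case: b => [[|[|[|b]]] ?] //;
  rewrite !ffunE /= ?ltnn ?eqxx ?c01 ?c02 ?c12 ?ij ?jk ?(ltn_trans ij jk) //=.
all: by rewrite ltn_eq_swap.
Qed.

Lemma occurs_congr (s : seq nat) (q q' : nat -> nat -> nat -> bool) : uniq s ->
  (forall x y z, x != y -> x != z -> y != z -> q x y z = q' x y z) ->
  occurs s q <-> occurs s q'.
Proof.
move=> us qq'.
have distinct i j k : i < j -> j < k -> k < size s ->
    [/\ nth 0 s i != nth 0 s j, nth 0 s i != nth 0 s k & nth 0 s j != nth 0 s k].
  move=> ij jk ks; have js := ltn_trans jk ks; have iS := ltn_trans ij js.
  by rewrite !nth_uniq // !neq_ltn ij jk (ltn_trans ij jk).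
by split; case=> i [j [k [ij jk ks qs]]]; exists i, j, k; split=> //;
  have [dij dik djk] := distinct i j k ij jk ks; rewrite ?qq' // -?qq'.
Qed.

Definition pattern_of (rmin llow : bool) : seq nat :=
  match rmin, llow with
  | true, false => [:: 2; 1; 3]
  | true, true => [:: 3; 1; 2]
  | false, false => [:: 1; 3; 2]
  | false, true => [:: 2; 3; 1]
  end.

Lemma contains_forbidden n (pi : 'S_n) rmin llow :
  contains pi (pattern_of rmin llow) <-> occurs (word pi) (forbidden rmin llow).
Proof.
case: rmin; case: llow; rewrite /pattern_of contains3 //;
  apply: occurs_congr (word_uniq pi) _ => x y z;
  rewrite /order_iso3 /forbidden /=;
  case: (ltngtP x y) => // xy _; case: (ltngtP x z) => // xz _;
  case: (ltngtP y z) => // yz _; lia.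
Qed.

Lemma nth_descents_word n (pi : 'S_n) j : j.+1 < n ->
  nth false (descents (word pi)) j = (Defs.pval pi j.+1 < Defs.pval pi j).
Proof. by move=> jn; rewrite nth_descents ?size_word // !nth_word. Qed.

Lemma ascent_descents n (pi : 'S_n) j : j.+1 < n ->
  (Defs.pval pi j < Defs.pval pi j.+1) = ~~ nth false (descents (word pi)) j.
Proof.
move=> jn; rewrite nth_descents_word // -leqNgt ltn_neqAle andb_idl // => _.
by rewrite -!nth_word nth_uniq ?size_word ?word_uniq //; lia.
Qed.

Lemma descent_set_descents n (pi1 pi2 : 'S_n) :
  descents (word pi1) = descents (word pi2) -> descent_set pi1 = descent_set pi2.
Proof.
move=> E; apply: eq_in_filter => i; rewrite mem_iota => /andP [i_pos i_lt].
have i'n : (i.-1).+1 < n by lia.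
by rewrite -(prednK i_pos) /= -!nth_descents_word // E.
Qed.

Lemma ballot_descents n (pi1 pi2 : 'S_n) :
  descents (word pi1) = descents (word pi2) -> ballot pi1 = ballot pi2.
Proof.
move=> E; apply: eq_forallb => m; congr (_ ==> _).
have mn : m <= n by rewrite -ltnS ltn_ord.
have des (pi : 'S_n) :
    des_prefix pi m = count (nth false (descents (word pi))) (iota 0 m.-1).
  apply: eq_in_count => j; rewrite mem_iota => /andP [_ jm].
  by rewrite nth_descents_word //; lia.
have asc (pi : 'S_n) :
    asc_prefix pi m = count (predC (nth false (descents (word pi)))) (iota 0 m.-1).
  apply: eq_in_count => j; rewrite mem_iota => /andP [_ jm].
  by rewrite ascent_descents //; lia.
by rewrite !des !asc E.
Qed.

Lemma in_Bal n p (pi : 'S_n) : (pi \in Bal n p) = (pi \in Av n p) && ballot pi.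
Proof. by rewrite inE. Qed.

Section TwinPermutations.
Variables (rmin : bool) (n : nat).

Lemma Av_label llow t (pi : 'S_n) :
  word pi = label rmin llow t -> pi \in Av n (pattern_of rmin llow).
Proof.
move=> piE; rewrite inE /avoids; apply/negP => /contains_forbidden.
by rewrite piE; apply: label_avoids.
Qed.

Lemma label_of_Av llow (pi : 'S_n) :
  pi \in Av n (pattern_of rmin llow) -> exists t, word pi = label rmin llow t.
Proof.
rewrite inE /avoids => /negP av.
have [t tE] : exists t, label rmin llow t = word pi.
  by apply: label_surj; [rewrite size_word word_perm | move/contains_forbidden/av].
by exists t.
Qed.

Lemma perm_of_label llow llow' t (pi : 'S_n) :
  word pi = label rmin llow t -> exists tau : 'S_n, word tau = label rmin llow' t.
Proof.
move=> piE; apply: word_surj.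
have <- : nodes t = n by rewrite -(size_label rmin llow) -piE size_word.
exact: label_perm.
Qed.

Definition twins (pi tau : 'S_n) : Prop :=
  exists t, word pi = label rmin false t /\ word tau = label rmin true t.

Definition twin (pi : 'S_n) : 'S_n := epsilon (inhabits 1%g) (twins pi).

Lemma twinP (pi : 'S_n) : pi \in Av n (pattern_of rmin false) -> twins pi (twin pi).
Proof.
move=> av; apply: (epsilon_spec (inhabits 1%g) (twins pi)).
have [t piE] := label_of_Av av; have [tau tauE] := perm_of_label true piE.
by exists tau, t.
Qed.

Lemma twins_injl (pi1 pi2 tau : 'S_n) : twins pi1 tau -> twins pi2 tau -> pi1 = pi2.
Proof.
case=> t1 [pi1E tau1E] [t2 [pi2E tau2E]]; apply: word_inj.
by rewrite pi1E pi2E (@label_inj rmin true t1 t2) // -tau1E.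
Qed.

Lemma twins_injr (pi tau1 tau2 : 'S_n) : twins pi tau1 -> twins pi tau2 -> tau1 = tau2.
Proof.
case=> t1 [pi1E tau1E] [t2 [pi2E tau2E]]; apply: word_inj.
by rewrite tau1E tau2E (@label_inj rmin false t1 t2) // -pi1E.
Qed.

Lemma twins_descents (pi tau : 'S_n) :
  twins pi tau -> descents (word tau) = descents (word pi).
Proof. by case=> t [piE tauE]; rewrite piE tauE !descents_label. Qed.

Lemma twin_bij :
  bij_between twin (Av n (pattern_of rmin false)) (Av n (pattern_of rmin true)).
Proof.
split.
- by move=> pi /twinP [t [_ tauE]]; apply: Av_label tauE.
- by move=> pi1 pi2 av1 av2 E; apply: twins_injl (twinP av1) _; rewrite E; apply: twinP.
- move=> tau /label_of_Av [t tauE]; have [pi piE] := perm_of_label false tauE.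
  have av : pi \in Av n (pattern_of rmin false) by apply: Av_label piE.
  by exists pi => //; apply: twins_injr (twinP av) _; exists t.
Qed.

Lemma twin_descent_set (pi : 'S_n) :
  pi \in Av n (pattern_of rmin false) -> descent_set (twin pi) = descent_set pi.
Proof. by move=> av; apply/descent_set_descents/twins_descents/twinP. Qed.

(* [twin] preserves the ballot property, so it restricts to a bijection
   between the ballot avoiders. *)
Lemma card_Bal_twin :
  #|Bal n (pattern_of rmin false)| = #|Bal n (pattern_of rmin true)|.
Proof.
have [inAv inj onto] := twin_bij.
have ballot_twin pi :
    pi \in Av n (pattern_of rmin false) -> ballot (twin pi) = ballot pi.
  by move=> av; apply/ballot_descents/twins_descents/twinP.
have -> : Bal n (pattern_of rmin true) = twin @: Bal n (pattern_of rmin false).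
  apply/setP => tau; apply/idP/imsetP.
    rewrite in_Bal => /andP [av bal]; have [pi av_pi tauE] := onto _ av.
    by exists pi => //; rewrite in_Bal av_pi -ballot_twin // tauE.
  case=> pi; rewrite in_Bal => /andP [av bal] ->.
  by rewrite in_Bal inAv //= ballot_twin.
rewrite card_in_imset // => pi1 pi2; rewrite !in_Bal => /andP [av1 _] /andP [av2 _].
exact: inj.
Qed.

End TwinPermutations.

Theorem mainTheorem18 :
  forall n : nat, 1 <= n ->
    (exists phi : 'S_n -> 'S_n,
        bij_between phi (Av n [:: 2; 1; 3]) (Av n [:: 3; 1; 2]) /\
        {in Av n [:: 2; 1; 3], forall pi, descent_set (phi pi) = descent_set pi}) /\
    (exists eta : 'S_n -> 'S_n,
        bij_between eta (Av n [:: 1; 3; 2]) (Av n [:: 2; 3; 1]) /\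
        {in Av n [:: 1; 3; 2], forall pi, descent_set (eta pi) = descent_set pi}) /\
    #|Bal n [:: 2; 1; 3]| = #|Bal n [:: 3; 1; 2]| /\
    #|Bal n [:: 1; 3; 2]| = #|Bal n [:: 2; 3; 1]|.
Proof.
move=> n _; split; last split; last split.
- exists (@twin true n).
  by split; [exact: twin_bij | exact: (@twin_descent_set true n)].
- exists (@twin false n).
  by split; [exact: twin_bij | exact: (@twin_descent_set false n)].
- exact: card_Bal_twin true n.
- exact: card_Bal_twin false n.
Qed.
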